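(* Let $\mathcal{C}$ be a combinatorial class with generating function $C(x)=\sum_{n\ge0}c_nx^n$, not reduced to its objects of size $0$, with radius of convergence $\rho>0$; let $C^\bullet(x)=xC'(x)$ and fix $x\in(0,\rho)$. Assume that for every $y\in(0,x]$ a Boltzmann sampler $\Gamma_y(\Theta\mathcal{C})$ with parameter $y$ for the pointed class $\Theta\mathcal{C}$ is available. Consider the procedure: draw $U\in[0,1]$ with density $u\mapsto \dfrac{C^\bullet(xu)}{u\,(C(x)-c_0)}$; independently, with probability $c_0/C(x)$ output a uniformly random object of size $0$ of $\mathcal{C}$, and otherwise run $\Gamma_{Ux}(\Theta\mathcal{C})$ and output the underlying object of $\mathcal{C}$ (forgetting the point). Then the output is distributed as a Boltzmann sampler for $\mathcal{C}$ with parameter $x$: each $a\in\mathcal{C}$ is output with probability $x^{|a|}/C(x)$. *)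

From Stdlib Require Import Bool Arith Reals Lra List.
Import ListNotations.
Open Scope R_scope.

Definition comb_class {A : Type} (size : A -> nat) (objs : nat -> list A) : Prop :=
  (forall n, NoDup (objs n)) /\ (forall n a, In a (objs n) <-> size a = n).

Definition cnt {A : Type} (objs : nat -> list A) (n : nat) : R :=
  INR (length (objs n)).

Definition series_converges (c : nat -> R) (y : R) : Prop :=
  exists l, infinite_sum (fun n => c n * y ^ n) l.

(** Radius of convergence of sum c_n y^n; [None] encodes +infinity. *)
Definition is_radius (c : nat -> R) (rho : option R) : Prop :=
  match rho with
  | Some r => (forall y, Rabs y < r -> series_converges c y) /\
              (forall y, r < Rabs y -> ~ series_converges c y)
  | None => forall y, series_converges c y
  end.

Definition radius_pos (rho : option R) : Prop :=
  match rho with Some r => 0 < r | None => True end.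

Definition lt_radius (x : R) (rho : option R) : Prop :=
  match rho with Some r => x < r | None => True end.

(** [G a i] = probability that the sampler outputs the pointed object (a,i)
    of the pointed class Theta C (i = the pointed atom, 1 <= i <= |a|).
    Boltzmann sampler for Theta C with parameter y, whose generating function
    is C^bullet(y) = y C'(y), given here as the value [Cb]. *)
Definition pointed_boltzmann {A : Type} (size : A -> nat) (Cby y : R)
    (G : A -> nat -> R) : Prop :=
  forall a i, G a i = if andb (Nat.leb 1 i) (Nat.leb i (size a))
                      then y ^ size a / Cby else 0.

Definition forget_point {A : Type} (size : A -> nat) (G : A -> nat -> R) (a : A) : R :=
  fold_right Rplus 0 (map (G a) (seq 1 (size a))).

Definition U_density (Cb : R -> R) (x c0 Cx : R) (u : R) : R :=
  Cb (x * u) / (u * (Cx - c0)).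

(** [procedure_prob ... a p]: the procedure outputs [a] with probability [p],
    computed by the law of total probability: size-0 branch with probability
    c0/C(x) (uniform among the c0 objects of size 0), otherwise run
    Gamma_{Ux}(Theta C) with U of density [U_density] and forget the point. *)
Definition procedure_prob {A : Type} (size : A -> nat) (objs : nat -> list A)
    (Cx : R) (Cb : R -> R) (G : R -> A -> nat -> R) (x : R) (a : A) (p : R) : Prop :=
  let c0 := cnt objs 0 in
  if Nat.eqb (size a) 0 then p = (c0 / Cx) * (1 / c0)
  else exists pr : Riemann_integrable
                     (fun u => U_density Cb x c0 Cx u * forget_point size (G (u * x)) a) 0 1,
         p = (1 - c0 / Cx) * RiemannInt pr.

(* Conditionally on U = u, the pointed sampler outputs a given [a] of size
   n > 0 with probability n (ux)^n / C^bullet(ux), one for each of its n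
   pointings.  Multiplying by the density of U, the factor C^bullet(ux)
   cancels and what remains is x^n / (C(x) - c_0) times n u^(n-1), whose
   integral over [0,1] is 1.  The branch of probability 1 - c_0/C(x) thus
   yields x^n / C(x), and the size-0 branch gives c_0/C(x) * 1/c_0 = 1/C(x). *)

From Stdlib Require Import Reals List Lra Lia.
Open Scope R_scope.

Lemma partial_sum_le_infinite_sum (t : nat -> R) (l : R) :
  (forall k, 0 <= t k) -> infinite_sum t l -> forall N, sum_f_R0 t N <= l.
Proof.
  intros Ht Hl N. apply growing_ineq; [|exact Hl].
  intro n. simpl. specialize (Ht (S n)). lra.
Qed.

Lemma infinite_sum_ge_two_terms (t : nat -> R) (l : R) (m : nat) :
  (forall k, 0 <= t k) -> infinite_sum t l -> (0 < m)%nat -> t 0%nat + t m <= l.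
Proof.
  intros Ht Hl Hm.
  assert (Hfirst : forall k, t 0%nat <= sum_f_R0 t k).
  { induction k as [|k IH]; simpl; [lra|]. specialize (Ht (S k)). lra. }
  assert (Hsum : t 0%nat + t m <= sum_f_R0 t m).
  { destruct m as [|m]; [lia|]. simpl. specialize (Hfirst m). lra. }
  pose proof (partial_sum_le_infinite_sum t l Ht Hl m). lra.
Qed.

Lemma fold_right_Rplus_map_const (f : nat -> R) (v : R) (s n : nat) :
  (forall i, (s <= i < s + n)%nat -> f i = v) ->
  fold_right Rplus 0 (map f (seq s n)) = INR n * v.
Proof.
  revert s. induction n as [|n IH]; intros s Hf; simpl; [lra|].
  rewrite Hf by lia. rewrite IH by (intros i Hi; apply Hf; lia).
  destruct n; simpl; lra.
Qed.

Lemma Riemann_integrable_zero_open (h : R -> R) (a b : R) :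
  a <= b -> (forall u, a < u < b -> h u = 0) -> Riemann_integrable h a b.
Proof.
  intros Hab Hh.
  assert (Hstep : IsStepFun h a b).
  { exists (a :: b :: nil), (0 :: nil). repeat split.
    - intros i Hi. simpl in Hi. destruct i; [simpl; lra | lia].
    - simpl. unfold Rmin. destruct (Rle_dec a b); lra.
    - simpl. unfold Rmax. destruct (Rle_dec a b); lra.
    - intros i Hi. simpl in Hi. destruct i; [|lia].
      intros u Hu. unfold open_interval in Hu. simpl in Hu. apply Hh. lra. }
  intro eps. exists (mkStepFun Hstep), (mkStepFun (StepFun_P4 a b 0)). split.
  - intros u _. simpl. unfold fct_cte, Rminus. rewrite Rplus_opp_r, Rabs_R0. lra.
  - rewrite StepFun_P18, Rmult_0_l, Rabs_R0. apply cond_pos.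
Qed.

Lemma Riemann_integrable_eq_open (f g : R -> R) (a b : R) :
  a <= b -> (forall u, a < u < b -> f u = g u) ->
  Riemann_integrable g a b -> Riemann_integrable f a b.
Proof.
  intros Hab Hfg Hg.
  assert (Hdiff : Riemann_integrable (fun u => f u - g u) a b).
  { apply Riemann_integrable_zero_open; [exact Hab|]. intros u Hu. rewrite Hfg by exact Hu. ring. }
  refine (@Riemann_integrable_ext (fun u => (f u - g u) + 1 * g u) f a b _
            (RiemannInt_P10 1 Hdiff Hg)).
  intros u _. ring.
Qed.

Lemma RiemannInt_derivative (F f : R -> R) (a b : R) (pr : Riemann_integrable f a b) :
  a <= b -> (forall u, derivable_pt_lim F u (f u)) ->
  (forall u, a <= u <= b -> continuity_pt f u) ->
  RiemannInt pr = F b - F a.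
Proof.
  intros Hab HF Hf.
  rewrite (RiemannInt_P20 Hab (FTC_P1 Hab Hf) pr).
  assert (HF' : antiderivative f F a b).
  { split; [|exact Hab]. intros u _. exists (exist _ (f u) (HF u)). reflexivity. }
  destruct (antiderivative_Ucte f _ _ _ _ (RiemannInt_P29 Hab Hf) HF') as [c Hc].
  rewrite (Hc b), (Hc a) by lra. ring.
Qed.

Lemma derivable_pt_lim_scal_pow (K : R) (n : nat) (u : R) :
  derivable_pt_lim (fun v => K * v ^ n) u (K * (INR n * u ^ pred n)).
Proof. apply (derivable_pt_lim_scal (fun v => v ^ n)), derivable_pt_lim_pow. Qed.

Lemma continuity_pt_scal_deriv_pow (K : R) (n : nat) (u : R) :
  continuity_pt (fun v => K * (INR n * v ^ pred n)) u.
Proof.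
  apply derivable_continuous_pt.
  exists (K * (INR n * (INR (pred n) * u ^ pred (pred n)))).
  apply (derivable_pt_lim_scal (fun v => INR n * v ^ pred n)).
  apply (derivable_pt_lim_scal (fun v => v ^ pred n)), derivable_pt_lim_pow.
Qed.

Section CountingSeries.

Variables (A : Type) (objs : nat -> list A).

Lemma cnt_nonneg (n : nat) : 0 <= cnt objs n.
Proof. apply pos_INR. Qed.

Lemma cnt_pos_of_In (n : nat) (a : A) : In a (objs n) -> 0 < cnt objs n.
Proof. intro Ha. apply lt_0_INR. destruct (objs n); simpl in *; [contradiction | lia]. Qed.

Hypothesis Hnontriv : exists m, (0 < m)%nat /\ (0 < length (objs m))%nat.

Lemma gf_sub_cnt0_pos (x Cx : R) :
  0 < x -> infinite_sum (fun n => cnt objs n * x ^ n) Cx -> 0 < Cx - cnt objs 0.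
Proof.
  intros Hx HCx. destruct Hnontriv as [m [Hm Hlen]].
  assert (Hnn : forall k, 0 <= cnt objs k * x ^ k).
  { intro k. apply Rmult_le_pos; [apply cnt_nonneg | apply pow_le; lra]. }
  pose proof (infinite_sum_ge_two_terms _ _ m Hnn HCx Hm) as Hle. simpl in Hle.
  assert (0 < cnt objs m * x ^ m) by (apply Rmult_lt_0_compat; [apply lt_0_INR, Hlen | apply pow_lt, Hx]).
  lra.
Qed.

Lemma pointed_gf_pos (y Cby : R) :
  0 < y -> infinite_sum (fun n => INR n * cnt objs n * y ^ n) Cby -> 0 < Cby.
Proof.
  intros Hy HCb. destruct Hnontriv as [m [Hm Hlen]].
  assert (Hnn : forall k, 0 <= INR k * cnt objs k * y ^ k).
  { intro k. apply Rmult_le_pos; [apply Rmult_le_pos; [apply pos_INR | apply cnt_nonneg] | apply pow_le; lra]. }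
  pose proof (infinite_sum_ge_two_terms _ _ m Hnn HCb Hm) as Hle. simpl in Hle.
  assert (0 < INR m * cnt objs m * y ^ m).
  { apply Rmult_lt_0_compat; [apply Rmult_lt_0_compat; [apply lt_0_INR, Hm | apply lt_0_INR, Hlen] | apply pow_lt, Hy]. }
  lra.
Qed.

End CountingSeries.

Lemma forget_point_boltzmann (A : Type) (size : A -> nat) (Cby y : R) (Gy : A -> nat -> R) (a : A) :
  pointed_boltzmann size Cby y Gy ->
  forget_point size Gy a = INR (size a) * (y ^ size a / Cby).
Proof.
  intro HG. apply fold_right_Rplus_map_const. intros i Hi.
  rewrite HG. replace (Nat.leb 1 i && Nat.leb i (size a))%bool with true; [reflexivity|].
  symmetry. apply andb_true_intro. split; apply Nat.leb_le; lia.
Qed.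

Lemma procedure_integrand_eq (A : Type) (size : A -> nat) (a : A) (Cb : R -> R)
    (G : R -> A -> nat -> R) (x c0 Cx u : R) :
  (0 < size a)%nat -> 0 < x -> 0 < u -> c0 < Cx -> 0 < Cb (u * x) ->
  pointed_boltzmann size (Cb (u * x)) (u * x) (G (u * x)) ->
  U_density Cb x c0 Cx u * forget_point size (G (u * x)) a
  = x ^ size a / (Cx - c0) * (INR (size a) * u ^ pred (size a)).
Proof.
  intros Hn Hx Hu Hc HCb HG.
  rewrite (forget_point_boltzmann _ _ _ _ _ _ HG). unfold U_density.
  assert (Hpow : u ^ size a = u * u ^ pred (size a)).
  { destruct (size a); [lia | reflexivity]. }
  rewrite (Rmult_comm x u), Rpow_mult_distr, Hpow. field. lra.
Qed.

Theorem mainTheorem7 (A : Type) (size : A -> nat) (objs : nat -> list A)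
  (Hclass : comb_class size objs)
  (Hnontriv : exists n, (0 < n)%nat /\ (0 < length (objs n))%nat)
  (rho : option R) (Hrad : is_radius (cnt objs) rho) (Hrho : radius_pos rho)
  (x : R) (Hx0 : 0 < x) (Hxrho : lt_radius x rho)
  (Cx : R) (HCx : infinite_sum (fun n => cnt objs n * x ^ n) Cx)
  (Cb : R -> R)
  (HCb : forall y, 0 < y <= x ->
         infinite_sum (fun n => INR n * cnt objs n * y ^ n) (Cb y))
  (G : R -> A -> nat -> R)
  (HG : forall y, 0 < y <= x -> pointed_boltzmann size (Cb y) y (G y)) :
  forall a : A, procedure_prob size objs Cx Cb G x a (x ^ size a / Cx).
Proof.
  intro a. unfold procedure_prob; cbv zeta.
  set (c0 := cnt objs 0). set (n := size a).
  assert (Hc0 : 0 <= c0) by apply cnt_nonneg.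
  assert (HCx0 : 0 < Cx - c0) by exact (gf_sub_cnt0_pos _ _ Hnontriv _ _ Hx0 HCx).
  destruct (Nat.eqb_spec n 0) as [Hn | Hn].
  - assert (Hc0pos : 0 < c0).
    { apply (cnt_pos_of_In _ _ _ a). apply (proj2 Hclass). exact Hn. }
    rewrite Hn. simpl. field. lra.
  - set (K := x ^ n / (Cx - c0)).
    set (g := fun u => K * (INR n * u ^ pred n)).
    set (f := fun u => U_density Cb x c0 Cx u * forget_point size (G (u * x)) a).
    assert (Hfg : forall u, 0 < u < 1 -> f u = g u).
    { intros u Hu.
      assert (Hux : 0 < u * x <= x) by (split; nra).
      apply procedure_integrand_eq; try lia; try lra; [|apply HG, Hux].
      exact (pointed_gf_pos _ _ Hnontriv _ _ (proj1 Hux) (HCb _ Hux)). }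
    assert (Hgi : Riemann_integrable g 0 1).
    { apply continuity_implies_RiemannInt; [lra|]. intros u _. apply continuity_pt_scal_deriv_pow. }
    pose proof (Riemann_integrable_eq_open f g 0 1 ltac:(lra) Hfg Hgi) as Hfi.
    exists Hfi.
    rewrite (RiemannInt_P18 Hfi Hgi ltac:(lra) Hfg).
    rewrite (RiemannInt_derivative (fun v => K * v ^ n)) by
      (lra || (intros; apply derivable_pt_lim_scal_pow) || (intros; apply continuity_pt_scal_deriv_pow)).
    rewrite pow1, pow_i by lia. unfold K. field. lra.
Qed.
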